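(* Let $p,d\in\mathbb{N}$ and let $G$ be a finite graph such that $\mathrm{Sep}(G,p)\le d$ and $K_{p,p}$ is not a minor of $G$. Then for every $k\ge p$, $$\mathrm{Sep}(G,k)\le d+k^2+k\,2^k\max\{p,d\}.$$
   Context: Graphs are finite, simple, undirected. $\mathrm{Sep}(G,k)$ is the maximum, over all vertex sets $S$ with $|S|\le k$, of the number of connected components of $G-S$. *)

(* A finite simple graph is a symmetric irreflexive
   relation e : rel T on a finType T. *)
From mathcomp Require Import all_boot.
Set Implicit Arguments. Unset Strict Implicit. Unset Printing Implicit Defensive.

Section Graphs.
Variable T : finType.
Variable e : rel T.

Definition induced_rel (A : {set T}) : rel T :=
  fun x y => [&& x \in A, y \in A & e x y].

Definition comp_in (A : {set T}) (x : T) : {set T} :=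
  [set y in A | connect (induced_rel A) x y].

Definition ncomp_del (S : {set T}) : nat :=
  #|[set comp_in (~: S) x | x in ~: S]|.

Definition Sep (k : nat) : nat :=
  \max_(S : {set T} | #|S| <= k) ncomp_del S.

Definition connected_set (A : {set T}) : Prop :=
  A != set0 /\ forall x y, x \in A -> y \in A -> connect (induced_rel A) x y.

Definition Kpq_minor (p q : nat) : Prop :=
  exists (X : 'I_p -> {set T}) (Y : 'I_q -> {set T}),
    (forall i, connected_set (X i)) /\
    (forall j, connected_set (Y j)) /\
    (forall i i', i != i' -> [disjoint X i & X i']) /\
    (forall j j', j != j' -> [disjoint Y j & Y j']) /\
    (forall i j, [disjoint X i & Y j]) /\
    (forall i j, exists x y, [&& x \in X i, y \in Y j & e x y]).
End Graphs.

From mathcomp Require Import all_boot.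
Set Implicit Arguments. Unset Strict Implicit. Unset Printing Implicit Defensive.

(* We prove the stronger bound  Sep(G,k) <= 2^k * max(p,d).
   Fix S with |S| <= k and sort the components of G - S by their
   neighbourhood A = N(C) in S; there are at most 2^|S| classes, so it
   suffices to bound each class by max(p,d):
   - if |A| <= p, every component C of G - S with N(C) = A is also a
     component of G - A, so the class has at most Sep(G,p) <= d members;
   - if |A| > p and the class had p members, then p vertices of A (as
     singleton branch sets) together with those p components (each adjacent
     to every vertex of A) would form a K_{p,p} minor. *)

Lemma pick_injective (U : finType) (A : {set U}) (p : nat) :
  p <= #|A| -> exists f : 'I_p -> U, injective f /\ forall i, f i \in A.
Proof.
move=> pA; exists (fun i => enum_val (widen_ord pA i)); split.
- by move=> i j /enum_val_inj /(congr1 val) /= ij; apply: val_inj.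
- by move=> i; apply: enum_valP.
Qed.

Section Components.
Variable T : finType.
Variable e : rel T.
Hypothesis e_sym : symmetric e.

Local Notation comp := (comp_in e).

Definition comps (S : {set T}) : {set {set T}} :=
  [set comp (~: S) x | x in ~: S].

Lemma induced_sym (A : {set T}) : symmetric (induced_rel e A).
Proof. by move=> x y; rewrite /induced_rel e_sym; case: (x \in A); case: (y \in A). Qed.

Lemma connect_within (r : rel T) (Y : {set T}) (x y : T) :
  subrel r e -> (forall z w, z \in Y -> r z w -> w \in Y) ->
  x \in Y -> connect r x y -> y \in Y /\ connect (induced_rel e Y) x y.
Proof.
move=> re closedY xY /connectP[q]; elim: q x xY => [|z q IH] x xY /=.
  by move=> _ ->; split.
case/andP=> rxz pq yq; have zY := closedY _ _ xY rxz.
have [yY czy] := IH z zY pq yq; split=> //.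
apply: connect_trans czy; apply: connect1.
by rewrite /induced_rel xY zY (re _ _ rxz).
Qed.

Lemma connect_induced_mono (B B' : {set T}) (x y : T) : B \subset B' ->
  connect (induced_rel e B) x y -> connect (induced_rel e B') x y.
Proof.
move=> sBB'; apply: connect_sub => a b /and3P[aB bB eab]; apply: connect1.
by rewrite /induced_rel (subsetP sBB' _ aB) (subsetP sBB' _ bB).
Qed.

Lemma comp_self (B : {set T}) (x : T) : x \in B -> x \in comp B x.
Proof. by move=> xB; rewrite inE xB connect0. Qed.

Lemma comp_closed (B : {set T}) (x z w : T) :
  z \in comp B x -> induced_rel e B z w -> w \in comp B x.
Proof.
rewrite !inE => /andP[_ cxz] r; have /and3P[_ wB _] := r.
by rewrite wB (connect_trans cxz (connect1 r)).
Qed.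

Lemma comp_eq (B : {set T}) (x y : T) : y \in comp B x -> comp B y = comp B x.
Proof.
rewrite inE => /andP[yB cxy]; apply/setP=> z; rewrite !inE.
have cyx : connect (induced_rel e B) y x by rewrite (sym_connect_sym (induced_sym B)).
case: (z \in B) => //=; apply/idP/idP => c.
- exact: connect_trans cxy c.
- exact: connect_trans cyx c.
Qed.

Lemma comp_connected (B : {set T}) (x : T) : x \in B -> connected_set e (comp B x).
Proof.
move=> xB; split; first by apply/set0Pn; exists x; apply: comp_self.
have from_x y : y \in comp B x -> connect (induced_rel e (comp B x)) x y.
  rewrite inE => /andP[_ cxy].
  have re : subrel (induced_rel e B) e by move=> a b /and3P[].
  by have [] := connect_within re (@comp_closed B x) (comp_self xB) cxy.
move=> y z yC zC; apply: connect_trans (from_x z zC).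
by rewrite (sym_connect_sym (induced_sym _)); apply: from_x.
Qed.

Lemma comp_disjoint (B : {set T}) (x y : T) :
  comp B x != comp B y -> [disjoint comp B x & comp B y].
Proof.
move=> neq; rewrite -setI_eq0; apply/eqP/setP => z; rewrite in_setI in_set0.
apply/negbTE/negP => /andP[zx zy]; move/eqP: neq; apply.
by rewrite -(comp_eq zx) -(comp_eq zy).
Qed.

Definition nbhd (S C : {set T}) : {set T} := [set s in S | [exists y in C, e y s]].

Definition comps_with (S A : {set T}) : {set {set T}} :=
  [set C in comps S | nbhd S C == A].

Lemma ncomp_del_by_nbhd (S : {set T}) :
  ncomp_del e S = \sum_(A in powerset S) #|comps_with S A|.
Proof.
rewrite /ncomp_del -/(comps S) -sum1_card.
rewrite (partition_big (nbhd S) (fun A => A \in powerset S)); last first.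
  by move=> C _; rewrite powersetE; apply/subsetP => s; rewrite inE => /andP[].
by apply: eq_bigr => A _; rewrite sum1dep_card.
Qed.

(* A component of G - S with neighbourhood inside A (A a subset of S)
   is also a component of G - A: removing S \ A does not touch it. *)
Lemma comp_shrink (S A : {set T}) (x : T) :
  A \subset S -> x \in ~: S -> nbhd S (comp (~: S) x) \subset A ->
  comp (~: S) x = comp (~: A) x.
Proof.
move=> sAS xS sNA; have sSA : ~: S \subset ~: A by rewrite setCS.
apply/setP => y; apply/idP/idP.
- rewrite inE => /andP[yS cxy].
  by rewrite inE (subsetP sSA y yS) (connect_induced_mono sSA cxy).
- rewrite inE => /andP[_ cxy].
  have re : subrel (induced_rel e (~: A)) e by move=> a b /and3P[].
  suff closedC z w : z \in comp (~: S) x -> induced_rel e (~: A) z w ->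
      w \in comp (~: S) x.
    by have [] := connect_within re closedC (comp_self xS) cxy.
  move=> zC r; have /and3P[_ wA ezw] := r.
  have wS : w \notin S.
    apply/negP => wS; have : w \in nbhd S (comp (~: S) x).
      by rewrite inE wS; apply/existsP; exists z; rewrite zC.
    by move/(subsetP sNA) => wA'; rewrite inE wA' in wA.
  apply: (comp_closed zC); rewrite /induced_rel ezw !inE wS !andbT.
  by move: zC; rewrite !inE => /andP[].
Qed.

(* Small classes: for A a subset of S, the class of A injects into the
   components of G - A. *)
Lemma comps_with_small (S A : {set T}) :
  A \subset S -> #|comps_with S A| <= ncomp_del e A.
Proof.
move=> sAS; apply: subset_leq_card; apply/subsetP => C.
rewrite inE => /andP[/imsetP[x xS ->] /eqP nbC].
have xA : x \in ~: A by apply: subsetP xS; rewrite setCS.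
by apply/imsetP; exists x; rewrite // (comp_shrink sAS xS) // nbC.
Qed.

(* Large classes: p vertices of A and q components all adjacent to the
   whole of A are the branch sets of a K_{p,q} minor. *)
Lemma Kpq_minor_of_class (S A : {set T}) (p q : nat) :
  A \subset S -> p <= #|A| -> q <= #|comps_with S A| -> Kpq_minor e p q.
Proof.
move=> sAS /pick_injective[a [a_inj aA]] /pick_injective[Y [Y_inj YA]].
have Ycomp j : exists2 x, x \in ~: S & Y j = comp (~: S) x.
  by have := YA j; rewrite inE => /andP[/imsetP[x xS ->] _]; exists x.
have Ynb j : nbhd S (Y j) = A by have := YA j; rewrite inE => /andP[_ /eqP].
exists (fun i => [set a i]), Y; split; [|split; [|split; [|split; [|split]]]].
- move=> i; split; first by apply/set0Pn; exists (a i); rewrite inE.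
  by move=> x y; rewrite !inE => /eqP-> /eqP->; apply: connect0.
- by move=> j; have [x xS ->] := Ycomp j; apply: comp_connected.
- move=> i i' ne; rewrite disjoints1 inE.
  by apply: contra ne => /eqP /a_inj ->.
- move=> j j' ne; have [x _ Ex] := Ycomp j; have [x' _ Ex'] := Ycomp j'.
  rewrite Ex Ex'; apply: comp_disjoint; rewrite -Ex -Ex'.
  by apply: contra ne => /eqP /Y_inj ->.
- move=> i j; rewrite disjoints1; have [x _ ->] := Ycomp j.
  by rewrite !inE (subsetP sAS).
- move=> i j; have := aA i; rewrite -(Ynb j) inE => /andP[_ /existsP[y /andP[yY eya]]].
  by exists (a i), y; rewrite inE eqxx yY e_sym.
Qed.

Lemma comps_with_bound (p d : nat) (S A : {set T}) :
  Sep e p <= d -> ~ Kpq_minor e p p -> A \subset S ->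
  #|comps_with S A| <= maxn p d.
Proof.
move=> Hsep Hmin sAS; case: (leqP #|A| p) => hA.
- apply: leq_trans (leq_maxr p d); apply: leq_trans Hsep.
  apply: leq_trans (comps_with_small sAS) _.
  by apply: (leq_bigmax_cond (F := ncomp_del e)).
- apply: leq_trans (leq_maxl p d); rewrite leqNgt; apply/negP => lt_p.
  exact: Hmin (Kpq_minor_of_class sAS (ltnW hA) (ltnW lt_p)).
Qed.

Lemma Sep_le_exp (p d k : nat) :
  Sep e p <= d -> ~ Kpq_minor e p p -> Sep e k <= 2 ^ k * maxn p d.
Proof.
move=> Hsep Hmin; apply/bigmax_leqP => S HS.
rewrite ncomp_del_by_nbhd; apply: (@leq_trans (2 ^ #|S| * maxn p d)).
  rewrite -card_powerset -sum_nat_const; apply: leq_sum => A.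
  by rewrite powersetE; apply: comps_with_bound.
by rewrite leq_mul2r leq_pexp2l // orbT.
Qed.

End Components.

Theorem proposition4p17 (T : finType) (e : rel T)
  (e_sym : symmetric e) (e_irr : irreflexive e) (p d : nat) :
  Sep e p <= d ->
  ~ Kpq_minor e p p ->
  forall k : nat, p <= k ->
    Sep e k <= d + k ^ 2 + k * 2 ^ k * maxn p d.
Proof.
move=> Hsep Hmin k pk; apply: leq_trans (Sep_le_exp e_sym k Hsep Hmin) _.
case: k pk => [|k] pk.
  by move: pk; rewrite leqn0 => /eqP p0; rewrite p0 max0n expn0 mul1n -addnA leq_addr.
by apply: leq_trans (leq_addl _ _); rewrite -mulnA leq_pmull.
Qed.
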